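(* Let $\theta\in(0,1)$ and let $P_\theta$ be the geometric distribution $p_\theta(i)=(1-\theta)\theta^i$, $i\ge0$. Then the Golomb code $\mathrm{G}k$ with $k=\lceil -1/\log_2\theta\rceil$ minimizes the maximal pointwise redundancy $R^*(N,P_\theta)=\sup_{i\ge0}\,[n(i)+\log_2 p_\theta(i)]$ over all binary prefix codes for the nonnegative integers.
   Context: A binary prefix code for the nonnegative integers assigns to each $i\ge 0$ a codeword $c(i)\in\{0,1\}^*$ such that no codeword is a prefix of another; $n(i)$ is the length of $c(i)$ and $N=\{n(i)\}$. For an integer $k\ge1$, let $b(x,k)$ ($0\le x<k$) be the $(x+1)$th codeword of the complete alphabetic binary code on $k$ items, in which the first $2^{\lceil\log_2k\rceil}-k$ items have length $\lfloor\log_2k\rfloor$ and the remaining $2k-2^{\lceil\log_2k\rceil}$ have length $\lceil\log_2k\rceil$ (empty string if $k=1$). The Golomb code $\mathrm{G}k$ assigns to $j\ge0$ the codeword $1^{\lfloor j/k\rfloor}\,0\,b(j\bmod k,k)$. *)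

From HB Require Import structures.
From mathcomp Require Import all_boot all_order all_algebra.
From mathcomp Require Import all_classical all_reals all_analysis.
Set Implicit Arguments. Unset Strict Implicit. Unset Printing Implicit Defensive.
Import Order.TTheory GRing.Theory Num.Theory.

Definition nat_code := nat -> seq bool.

(* Prefix code: no codeword is a prefix of a different codeword
   (since every word is a prefix of itself, this also forces injectivity). *)
Definition prefix_code (c : nat_code) : Prop :=
  forall i j : nat, i <> j -> ~~ prefix (c i) (c j).

(* The m-bit big-endian binary representation of n (n < 2^m). *)
Definition bin (m n : nat) : seq bool :=
  [seq odd (n %/ 2 ^ (m - i.+1)) | i <- iota 0 m].

(* b(x,k): (x+1)-th codeword of the complete alphabetic binary code on k items.
   With L = ceil(log2 k) and u = 2^L - k, the first u items get the words of
   length L-1 = floor(log2 k) (in lexicographic order), the remaining ones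
   get the words of length L after them. For k = 1 this is the empty word. *)
Definition bcode (x k : nat) : seq bool :=
  let L := up_log 2 k in
  let u := 2 ^ L - k in
  if x < u then bin L.-1 x else bin L (x + u).

Definition golomb (k : nat) : nat_code :=
  fun j => nseq (j %/ k) true ++ false :: bcode (j %% k) k.

Local Open Scope ring_scope.

Definition log2 {R : realType} (x : R) : R := ln x / ln 2.

Definition geom_p {R : realType} (theta : R) (i : nat) : R :=
  (1 - theta) * theta ^+ i.

Definition max_pt_red {R : realType} (c : nat_code) (p : nat -> R) : \bar R :=
  ereal_sup [set ((size (c i))%:R + log2 (p i))%:E | i in [set: nat]]%classic.

From HB Require Import structures.
From mathcomp Require Import all_boot all_order all_algebra.
From mathcomp Require Import all_classical all_reals all_analysis.
From mathcomp Require Import zify lra.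
Import Order.TTheory GRing.Theory Num.Theory.

(* Let a = -log2 theta, so that the pointwise redundancy of a code is
   n(i) - i a + log2 (1 - theta), and k = ceil (1/a), so that (k-1) a < 1 <= k a.
   With L = ceil (log2 k) and u = 2^L - k, every Golomb codeword satisfies
   n(i) - i a <= L + 1 - u a.  Conversely, if a prefix code had
   n(i) - i a < L + 1 - u a for all i, then, since (k-1) a < 1, its lengths would
   be bounded by the staircase profile (u + 1 lengths L, then k - 1 lengths of
   each L + 1, L + 2, ...), and strictly below it at i = u + q (k-1) + 1 for q
   large.  The staircase has Kraft sum exactly 1, so Kraft's inequality fails on
   a long enough initial segment.  For k = 1 the bound forces an empty codeword. *)

Set Implicit Arguments.
Unset Strict Implicit.
Unset Printing Implicit Defensive.

Lemma size_bin m n : size (bin m n) = m.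
Proof. by rewrite size_map size_iota. Qed.

Lemma bin_cat m d y : bin (m + d) y = bin m (y %/ 2 ^ d) ++ bin d y.
Proof.
rewrite /bin iotaD map_cat add0n -[in iota m d](addn0 m) iotaDl -map_comp.
congr (_ ++ _); last by apply: eq_map => j /=; congr (odd (_ %/ 2 ^ _)); lia.
apply/eq_in_map => i; rewrite mem_iota => /andP[_ lt_im].
by rewrite -divnMA -expnD; congr (odd (_ %/ 2 ^ _)); lia.
Qed.

Lemma bin_inj m : {in gtn (2 ^ m) &, injective (bin m)}.
Proof.
elim: m => [|m IHm] x y; first by rewrite !inE expn0 !ltnS !leqn0 => /eqP-> /eqP->.
rewrite !inE -[m.+1]addn1 !bin_cat expnD expn1 => ltx lty /eqP.
rewrite eqseq_cat ?size_bin // => /andP[/eqP/IHm eq_half /eqP[eq_odd]].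
rewrite subnn expn0 !divn1 in eq_odd.
rewrite -[x]odd_double_half -[y]odd_double_half eq_odd -!divn2.
by rewrite eq_half // inE ltn_divLR.
Qed.

Lemma prefix_bin m n x y : x < 2 ^ m -> y < 2 ^ n ->
  prefix (bin m x) (bin n y) = (m <= n) && (x == y %/ 2 ^ (n - m)).
Proof.
move=> ltx lty; case: leqP => [le_mn | lt_nm]; last first.
  by apply/negbTE/negP => /size_prefix; rewrite !size_bin leqNgt lt_nm.
rewrite -(subnKC le_mn) in lty *; rewrite addKn bin_cat prefixE size_bin.
rewrite take_size_cat ?size_bin // eq_sym (inj_in_eq (@bin_inj m)) // inE.
by rewrite ltn_divLR ?expn_gt0 // -expnD.
Qed.

Lemma up_log2_bounds k : 0 < k -> k <= 2 ^ up_log 2 k < k.*2.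
Proof.
move=> k_gt0; rewrite up_logP //=; case: (ltnP 1 k) => [k_gt1 | ]; last first.
  by case: k k_gt0 => [|[]].
have := up_log_gtn (isT : 1 < 2) k_gt1.
by rewrite -(ltn_pmul2l (isT : 0 < 2)) -expnS prednK ?mul2n // up_log_gt0 k_gt1.
Qed.

Lemma bcode_prefix k x y : x < k -> y < k ->
  prefix (bcode x k) (bcode y k) = (x == y).
Proof.
move=> ltxk ltyk; have /andP[] := up_log2_bounds (leq_ltn_trans (leq0n x) ltxk).
rewrite /bcode; case: (up_log 2 k) => [|L] /= kP Pk.
  rewrite expn0 in kP; have -> : x = y by lia.
  by rewrite eqxx; case: ifP => _; apply: prefix_refl.
have [xu|xu] := ltnP; have [yu|yu] := ltnP;
  rewrite prefix_bin ?expnS ?subSnn ?subnn ?expn1 ?expn0 ?divn1 //.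
all: rewrite ?leqnn ?ltnn ?ltnSn ?leqnSn /=; move: kP Pk xu yu.
all: by rewrite !expnS; move: (2 ^ L) => P; lia.
Qed.

Lemma prefix_unary a b (s t : seq bool) :
  prefix (nseq a true ++ false :: s) (nseq b true ++ false :: t) =
  (a == b) && prefix s t.
Proof. by elim: a b => [|a IHa] [|b] //=; rewrite IHa. Qed.

Lemma golomb_prefix_code k : 0 < k -> prefix_code (golomb k).
Proof.
move=> k_gt0 i j neq_ij; rewrite /golomb prefix_unary bcode_prefix ?ltn_pmod //.
apply/negP => /andP[/eqP eq_div /eqP eq_mod]; apply: neq_ij.
by rewrite (divn_eq i k) (divn_eq j k) eq_div eq_mod.
Qed.

Lemma size_golomb k i : 0 < k ->
  size (golomb k i) + (i %% k < 2 ^ up_log 2 k - k) = (i %/ k + up_log 2 k).+1.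
Proof.
move=> k_gt0; rewrite /golomb /bcode size_cat size_nseq /=.
by case: (up_log 2 k) => [|L]; case: ifP; rewrite size_bin ?expn0 /=; lia.
Qed.

Definition prefix_free (W : seq (seq bool)) :=
  pairwise [rel s t | ~~ prefix s t && ~~ prefix t s] W.

Definition branch (b : bool) (W : seq (seq bool)) :=
  [seq behead w | w <- W & ohead w == Some b].

Lemma prefix_free_nil W : prefix_free W -> [::] \in W -> W = [:: [::]].
Proof.
elim: W => [|w W IHW] //; rewrite /prefix_free pairwise_cons inE.
case/andP=> free_w free_W; case: eqP free_w => [<- | _ free_w /= nil_W].
  by case: W {IHW free_W} => [|t W] //=; rewrite prefix0s.
by move: free_w; rewrite IHW //= prefix0s andbF.
Qed.

Lemma prefix_free_branch b W : prefix_free W -> prefix_free (branch b W).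
Proof.
move=> /(pairwise_filter (fun w => ohead w == Some b)); rewrite /prefix_free pairwise_map.
apply: sub_in_pairwise (filter_all _ _).
by move=> [|x v] [|y w] //= /eqP[->] /eqP[->]; rewrite eqxx.
Qed.

Lemma sum_branch D W : [::] \notin W ->
  \sum_(w <- W) 2 ^ (D.+1 - size w) =
  \sum_(v <- branch true W) 2 ^ (D - size v) +
  \sum_(v <- branch false W) 2 ^ (D - size v).
Proof.
move=> nil_W; rewrite !big_map !big_filter (bigID (fun w => ohead w == Some true)) /=.
congr (_ + _); first by apply: eq_bigr => -[|x w].
rewrite big_seq_cond [RHS]big_seq_cond.
apply: eq_big => [[|[] w] | [|x w] /andP[w_in _]] //=.
  by rewrite andbT andbF; apply: negbTE.
by case/negP: nil_W.
Qed.

Lemma all_size_branch b D W : all (fun w => size w <= D.+1) W ->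
  all (fun v => size v <= D) (branch b W).
Proof.
move=> size_W; apply/allP => _ /mapP[w /[!mem_filter] /andP[_ /(allP size_W) size_w] ->].
by rewrite size_behead -subn1 leq_subLR add1n.
Qed.

Lemma kraft D W : prefix_free W -> all (fun w => size w <= D) W ->
  \sum_(w <- W) 2 ^ (D - size w) <= 2 ^ D.
Proof.
elim: D W => [|D IHD] W free_W size_W; have [nil_W|nil_W] := boolP ([::] \in W).
- by rewrite (prefix_free_nil free_W nil_W) big_seq1.
- by case: W size_W nil_W {free_W} => [|[] W] //=; rewrite big_nil.
- by rewrite (prefix_free_nil free_W nil_W) big_seq1.
rewrite sum_branch // expnS mul2n -addnn.
by apply: leq_add; apply: IHD; rewrite ?prefix_free_branch ?all_size_branch.
Qed.

Lemma kraft_prefix_code c N D : prefix_code c ->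
  (forall i, i < N -> size (c i) <= D) ->
  \sum_(0 <= i < N) 2 ^ (D - size (c i)) <= 2 ^ D.
Proof.
move=> pc size_c; rewrite -(big_map c xpredT (fun w => 2 ^ (D - size w))).
apply: kraft.
  rewrite /prefix_free pairwise_map; have := iota_uniq 0 (N - 0); rewrite uniq_pairwise.
  by apply: sub_pairwise => i j /= /eqP neq_ij; rewrite !pc // => /esym.
by apply/allP => _ /mapP[i /[!mem_index_iota] /andP[_ /size_c] ? ->].
Qed.

Section Staircase.

Variables (L u K : nat).
Hypothesis K_gt0 : 0 < K.

(* Lengths of the complete code with u + 1 words of length L followed by K words
   of each length L + 1, L + 2, ... *)
Definition stair_len i := L + (i - u + K.-1) %/ K.

Lemma stair_len_ub i : i <= u + (stair_len i - L) * K.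
Proof. by have := ltn_ceil (i - u + K.-1) K_gt0; rewrite /stair_len addKn; lia. Qed.

Lemma stair_len_le Q i : i <= u + Q * K -> stair_len i <= L + Q.
Proof. by move=> le_i; rewrite leq_add2l -ltnS ltn_divLR //; lia. Qed.

Lemma stair_len_eq Q i : u + Q * K < i <= u + Q.+1 * K -> stair_len i = L + Q.+1.
Proof.
move=> /andP[lt_i le_i]; rewrite /stair_len; congr (_ + _).
have -> : i - u + K.-1 = Q.+1 * K + (i - u - Q * K).-1 by lia.
by rewrite divnMDl // divn_small ?addn0 //; lia.
Qed.

Hypothesis complete : u + K + 1 = 2 ^ L.

Lemma sum_stair_len Q :
  \sum_(0 <= i < u + Q * K + 1) 2 ^ (L + Q - stair_len i) + K = 2 ^ (L + Q).
Proof.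
elim: Q => [|Q IHQ].
  rewrite addn0 -complete -[X in _ = X]addn0.
  rewrite (eq_big_nat _ _ (F2 := fun _ => 1)) ?sum_nat_const_nat; first lia.
  by move=> i /andP[_ lt_i]; rewrite /stair_len divn_small ?addn0 ?subnn //; lia.
rewrite (big_cat_nat _ (n := u + Q * K + 1)) /=; [|lia|lia].
have -> : \sum_(0 <= i < u + Q * K + 1) 2 ^ (L + Q.+1 - stair_len i) =
          2 * \sum_(0 <= i < u + Q * K + 1) 2 ^ (L + Q - stair_len i).
  rewrite big_distrr; apply: eq_big_nat => i /andP[_ lt_i].
  by rewrite (addnS L Q) subSn ?expnS // stair_len_le //; lia.
have -> : \sum_(u + Q * K + 1 <= i < u + Q.+1 * K + 1) 2 ^ (L + Q.+1 - stair_len i) = K.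
  rewrite (eq_big_nat _ _ (F2 := fun _ => 1)) ?sum_nat_const_nat; first lia.
  by move=> i le_i; rewrite (stair_len_eq (Q := Q)) ?addnS ?subnn //; lia.
by rewrite (addnS L Q) expnS -IHQ; lia.
Qed.

Lemma prefix_code_stair_len c : prefix_code c ->
  (forall i, size (c i) <= stair_len i) -> forall i, size (c i) = stair_len i.
Proof.
move=> pc le_len i0; apply/eqP; rewrite eqn_leq le_len leqNgt; apply/negP => lt_i0.
have [Q [lt_i0N lt_K]] : exists Q, i0 < u + Q * K + 1 /\ K < 2 ^ (L + Q - stair_len i0).
  exists (i0 + K); split; first by nia.
  apply: leq_trans (ltn_expl K (isT : 1 < 2)) _; rewrite leq_exp2l //.
  by have := @stair_len_le i0 i0; nia.
have le_len_Q i : i < u + Q * K + 1 -> stair_len i <= L + Q.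
  by move=> lt_iN; apply: stair_len_le; lia.
have := kraft_prefix_code pc (fun i lt_iN => leq_trans (le_len i) (le_len_Q i lt_iN)).
have i0_N : i0 \in index_iota 0 (u + Q * K + 1) by rewrite mem_index_iota.
rewrite (bigD1_seq i0) ?iota_uniq //= -(sum_stair_len Q) (bigD1_seq i0) ?iota_uniq //=.
have le_rest :
    \sum_(0 <= i < u + Q * K + 1 | i != i0) 2 ^ (L + Q - stair_len i) <=
    \sum_(0 <= i < u + Q * K + 1 | i != i0) 2 ^ (L + Q - size (c i)).
  by apply: leq_sum => i _; rewrite leq_exp2l // leq_sub2l.
have gap_i0 : 2 * 2 ^ (L + Q - stair_len i0) <= 2 ^ (L + Q - size (c i0)).
  by rewrite -expnS leq_exp2l //; have := le_len_Q i0 lt_i0N; lia.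
lia.
Qed.

End Staircase.

Local Open Scope ring_scope.

Definition golomb_max_red (R : numDomainType) (k : nat) (a : R) : R :=
  (up_log 2 k).+1%:R - (2 ^ up_log 2 k - k)%:R * a.

Lemma natr_mul_ge1_gt0 (R : numDomainType) k (a : R) : 1 <= k%:R * a -> (0 < k)%N.
Proof. by rewrite lt0n; apply: contraTneq => ->; rewrite mul0r ler10. Qed.

Lemma golomb_red_le (R : realFieldType) k (a : R) i :
  0 <= a -> 1 <= k%:R * a -> k.-1%:R * a < 1 ->
  (size (golomb k i))%:R - i%:R * a <= golomb_max_red k a.
Proof.
move=> a_ge0 ka_ge1 ka_lt1; have k_gt0 := natr_mul_ge1_gt0 ka_ge1.
have /andP[_ Pk] := up_log2_bounds k_gt0; have size_i := size_golomb i k_gt0.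
rewrite /golomb_max_red; set L := up_log 2 k in Pk size_i *; set u := (2 ^ L - k)%N.
have -> : i%:R * a = (i %/ k)%:R * (k%:R * a) + (i %% k)%:R * a.
  by rewrite {1}(divn_eq i k) natrD natrM mulrDl mulrA.
have q_le : (i %/ k)%:R <= (i %/ k)%:R * (k%:R * a) :> R by rewrite ler_peMr.
have ua_lt1 : u%:R * a < 1.
  by apply: le_lt_trans ka_lt1; rewrite ler_wpM2r // ler_nat; lia.
have [lt_xu | le_ux] := ltnP (i %% k) u.
- have -> : size (golomb k i) = (i %/ k + L)%N by move: size_i; rewrite lt_xu; lia.
  have : 0 <= (i %% k)%:R * a :> R by rewrite mulr_ge0.
  by rewrite -!natr1 !natrD; lra.
- have -> : size (golomb k i) = (i %/ k + L).+1%N by move: size_i; rewrite ltnNge le_ux; lia.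
  have : u%:R * a <= (i %% k)%:R * a :> R by rewrite ler_wpM2r // ler_nat.
  by rewrite -!natr1 !natrD; lra.
Qed.

Section RedundancyLowerBound.

Variables (R : archiFieldType) (c : nat_code) (a : R) (L u K : nat).
Hypotheses (a_ge0 : 0 <= a) (Ka_lt1 : K%:R * a < 1) (K_gt0 : (0 < K)%N).
Hypothesis red_lt : forall i, (size (c i))%:R - i%:R * a < L.+1%:R - u%:R * a.

Lemma size_le_stair_len i : (size (c i) <= stair_len L u K i)%N.
Proof.
have := stair_len_ub L u K_gt0 i; rewrite {2}/stair_len addKn.
set m := ((i - u + K.-1) %/ K)%N => le_i.
have : i%:R - u%:R <= m%:R * K%:R :> R by rewrite lerBlDl -natrM -natrD ler_nat.
move/(ler_wpM2r a_ge0); rewrite mulrBl -mulrA => le_ia.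
have : m%:R * (K%:R * a) <= m%:R :> R by rewrite ler_piMr // ltW.
have := red_lt i; rewrite -ltnS -(ltr_nat R) -!natr1 natrD.
by lra.
Qed.

Lemma exists_size_lt_stair_len : exists i, (size (c i) < stair_len L u K i)%N.
Proof.
have [q q_gt] : exists q : nat, a < q%:R * (1 - K%:R * a).
  exists (Num.bound (a / (1 - K%:R * a))).
  by rewrite -ltr_pdivrMr ?subr_gt0 // archi_boundP // divr_ge0 // subr_ge0 ltW.
exists (u + q * K + 1)%N; rewrite (stair_len_eq L K_gt0 (Q := q)); last by lia.
have := red_lt (u + q * K + 1); rewrite -(ltr_nat R) -!natr1 !natrD natrM.
by lra.
Qed.

End RedundancyLowerBound.

Lemma prefix_code_size_gt0 c i : prefix_code c -> (0 < size (c i))%N.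
Proof.
move=> pc; rewrite lt0n size_eq0; apply: contra (pc i i.+1 (n_Sn i)) => /eqP->.
exact: prefix0s.
Qed.

Lemma prefix_code_red_ge (R : archiFieldType) (c : nat_code) k (a : R) :
  prefix_code c -> 0 <= a -> (0 < k)%N -> k.-1%:R * a < 1 ->
  exists i, golomb_max_red k a <= (size (c i))%:R - i%:R * a.
Proof.
move=> pc a_ge0 k_gt0 ka_lt1; apply: contrapT; rewrite -forallNE => red_ge.
have red_lt i : (size (c i))%:R - i%:R * a < golomb_max_red k a.
  by rewrite ltNge; apply/negP/red_ge.
have /andP[kP _] := up_log2_bounds k_gt0.
have [k1 | K_gt0] := posnP k.-1.
  have := red_lt 0; rewrite /golomb_max_red (_ : k = 1%N); last by lia.
  rewrite up_log1 subnn mul0r !subr0 ltr_nat ltnS leqn0.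
  by have := prefix_code_size_gt0 0 pc; rewrite lt0n => /negPf->.
have complete : (2 ^ up_log 2 k - k + k.-1 + 1 = 2 ^ up_log 2 k)%N by lia.
have size_le := size_le_stair_len a_ge0 ka_lt1 K_gt0 red_lt.
have [i0] := exists_size_lt_stair_len a_ge0 ka_lt1 K_gt0 red_lt.
by rewrite (prefix_code_stair_len K_gt0 complete pc size_le) ltnn.
Qed.

Lemma ceil_inv_mul_bounds (R : archiFieldType) (a : R) : 0 < a ->
  1 <= `|Num.ceil a^-1|%N%:R * a /\ `|Num.ceil a^-1|%N.-1%:R * a < 1.
Proof.
move=> a_gt0; have /andP[lt_ceil ge_ceil] := ceil_itv a^-1.
have ceil_gt0 : 0 < Num.ceil a^-1 by rewrite -(ltr0z R) (lt_le_trans _ ge_ceil) ?invr_gt0.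
have k_eq : `|Num.ceil a^-1|%N%:R = (Num.ceil a^-1)%:~R :> R.
  by rewrite natr_absz gtr0_norm.
have k_gt0 : (0 < `|Num.ceil a^-1|%N)%N by rewrite absz_gt0 gt_eqF.
have inv_mul : a^-1 * a = 1 by rewrite mulVf ?gt_eqF.
split; first by rewrite k_eq -[leLHS]inv_mul ler_wpM2r // ltW.
have := lt_ceil; rewrite -(ltr_pM2r a_gt0) inv_mul.
by rewrite intrB -k_eq -subn1 natrB.
Qed.

Lemma log2_geom_p (R : realType) (theta : R) i : 0 < theta < 1 ->
  log2 (geom_p theta i) = log2 (1 - theta) + i%:R * log2 theta.
Proof.
move=> /andP[theta_gt0 theta_lt1].
rewrite /log2 /geom_p lnM ?posrE ?subr_gt0 ?exprn_gt0 // lnXn //.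
by rewrite mulrDl mulr_natl mulrnAl.
Qed.

Theorem theorem4 (R : realType) (theta : R) (h0 : 0 < theta) (h1 : theta < 1) :
  let k : nat := `| Num.ceil (- 1 / log2 theta) |%N in
  prefix_code (golomb k) /\
  forall c : nat_code, prefix_code c ->
    (max_pt_red (golomb k) (geom_p theta) <= max_pt_red c (geom_p theta))%E.
Proof.
set a := - log2 theta; rewrite (_ : -1 / log2 theta = a^-1); last by rewrite mulN1r invrN.
have a_gt0 : 0 < a.
  by rewrite oppr_gt0 /log2 pmulr_llt0 ?invr_gt0 ?ln_gt0 ?ltr1n // ln_lt0 // h0 h1.
move=> k; have [ka_ge1 ka_lt1] : 1 <= k%:R * a /\ k.-1%:R * a < 1.
  exact: ceil_inv_mul_bounds.
have k_gt0 := natr_mul_ge1_gt0 ka_ge1.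
have red_geom i : log2 (geom_p theta i) = log2 (1 - theta) - i%:R * a.
  by rewrite log2_geom_p ?h0 // /a mulrN opprK.
split; first exact: golomb_prefix_code.
move=> c pc; have [i0 red_i0] := prefix_code_red_ge pc (ltW a_gt0) k_gt0 ka_lt1.
apply: ub_ereal_sup => _ [i _ <-]; apply: le_trans (ereal_sup_ubound _); last by exists i0.
rewrite lee_fin !red_geom; have := golomb_red_le i (ltW a_gt0) ka_ge1 ka_lt1; lra.
Qed.
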